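(* Let $k$ be the number of agents. For every $\rho>1-\frac{1}{2k+1}$ there exists an instance of fully-symmetric adversarial multi-agent delegation with $k$ agents such that no (deterministic) delegation mechanism $M$ achieves $\mathbb{E}[\mathrm{Principal}]\ge\rho\,\mathbb{E}[\mathrm{Opt}]$ when the agents behave adversarially, where $\mathrm{Opt}=\max_{e\in E}x(V(e))$. That is, no mechanism achieves strictly better than a $\left(1-\frac{1}{2k+1}\right)$-approximation on all such instances.
   Context: Multi-agent delegation instance: $k$ agents; agent $i$ holds elements $e_{i,1},\dots,e_{i,m_i}$; $E$ is the set of all elements. Each element $e$ has a random outcome $V(e)$ drawn from a distribution over its own outcome set $\Omega(e)$ (disjoint across elements), the $V(e)$ being mutually independent; each outcome $\omega$ has principal utility $x(\omega)\ge0$. Each agent observes the realized outcomes of its own elements. Fully-symmetric: all agents have the same number of elements and all $V(e)$ are identically distributed. A (deterministic) mechanism consists of signal sets $\Sigma_1,\dots,\Sigma_k$ and a function $g:\Sigma_1\times\dots\times\Sigma_k\to\Omega\cup\{\bot\}$ ($\Omega$ the set of all outcomes); each agent sends a signal, and if $g$ outputs an outcome $\omega$ actually observed by some agent, the principal gets $x(\omega)$ and that agent wins; if $g$ outputs $\bot$ or an unobserved outcome, the principal gets $0$. Adversarial behavior: each agent chooses its signal to minimize the principal's expected utility subject to keeping a positive probability of winning. $\mathrm{Principal}$ denotes the principal's (random) utility. *)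

From mathcomp Require Import all_boot all_order all_algebra.
From mathcomp Require Import reals.
Set Implicit Arguments. Unset Strict Implicit. Unset Printing Implicit Defensive.
Import Order.TTheory GRing.Theory Num.Theory.
Local Open Scope ring_scope.

(*  - k agents, indexed by 'I_k; agent i holds the m elements (i, j), j<m. *)
(*  - Every element has a copy of a common finite outcome-type set T, with *)
(*    common probabilities p : T -> R and principal utility x : T -> R.    *)
(*    The outcome set of element (i,j) is Omega(i,j) = {(i,j,t) | t : T}, *)
(*    so outcome sets are disjoint and all V(e) are identically            *)
(*    distributed.                                                          *)
(*  - A realization w assigns to every element (i,j) its outcome type      *)
(*    w i j; the V(e) are independent: prob w = prod_{i,j} p (w i j).      *)

Section Delegation.
Variables (R : realType) (k m : nat) (T : finType).

Definition obs := {ffun 'I_m -> T}.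
Definition realization := {ffun 'I_k -> obs}.
Definition outcome := ('I_k * 'I_m * T)%type.

Variables (p x : T -> R).

Definition sym_instance : Prop :=
  [/\ forall t, 0 <= p t, \sum_(t : T) p t = 1 & forall t, 0 <= x t].

Definition prob_real (w : realization) : R :=
  \prod_(i < k) \prod_(j < m) p (w i j).

(* principal's utility when g outputs o (None = bottom) under realization w:
   x(omega) if omega is actually observed (by its owner), 0 otherwise *)
Definition payoff (o : option outcome) (w : realization) : R :=
  if o is Some (i, j, t) then (if w i j == t then x t else 0) else 0.

Definition wins (i : 'I_k) (o : option outcome) (w : realization) : bool :=
  if o is Some (i', j, t) then (i' == i) && (w i' j == t) else false.

Definition EOpt : R :=
  \sum_(w : realization) prob_real w *
     \big[Num.max/0]_(e : 'I_k * 'I_m) x (w e.1 e.2).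

(* A deterministic mechanism: signal sets Sigma i and g. *)
Variables (Sigma : 'I_k -> Type) (g : (forall i, Sigma i) -> option outcome).

Definition profile := forall i : 'I_k, obs -> Sigma i.

Definition signals (s : profile) (w : realization) : forall i, Sigma i :=
  fun i => s i (w i).

Definition EPrincipal (s : profile) : R :=
  \sum_(w : realization) prob_real w * payoff (g (signals s w)) w.

(* For agent i observing a and sending sigma while the others follow s:
   (unnormalised, i.e. multiplied by P[agent i observes a]) expected
   principal utility and probability that agent i wins. *)
Definition Udev (s : profile) (i : 'I_k) (a : obs) (sigma : Sigma i) : R :=
  \sum_(w : realization | w i == a)
     prob_real w * payoff (g (dfwith (signals s w) sigma)) w.

Definition Wdev (s : profile) (i : 'I_k) (a : obs) (sigma : Sigma i) : R :=
  \sum_(w : realization | w i == a)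
     prob_real w * (wins i (g (dfwith (signals s w) sigma)) w)%:R.

Definition adversarial (s : profile) : Prop :=
  forall (i : 'I_k) (a : obs),
    ((exists sigma : Sigma i, 0 < Wdev s a sigma) ->
       0 < Wdev s a (s i a) /\
       forall sigma : Sigma i, 0 < Wdev s a sigma -> Udev s a (s i a) <= Udev s a sigma)
    /\
    ((~ exists sigma : Sigma i, 0 < Wdev s a sigma) ->
       forall sigma : Sigma i, Udev s a (s i a) <= Udev s a sigma).

(* M achieves E[Principal] >= rho E[Opt] under adversarial behaviour:
   adversarial behaviour is well defined (some adversarial profile exists)
   and every adversarial profile yields the guarantee. *)
Definition achieves (rho : R) : Prop :=
  (exists s : profile, adversarial s) /\
  forall s : profile, adversarial s -> rho * EOpt <= EPrincipal s.

End Delegation.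

(* Each agent holds two elements, independently "high" with probability q (value 1/q)
   or "low" (value 1), so E[Opt] <= 1 + 2k, while every element is low with probability
   P0 >= 1 - 2kq.  On that all-low realization the mechanism either earns nothing, losing
   P0, or selects a low outcome (i, j0).  In the latter case consider the realization
   where only the other element j1 of agent i is high.  Agent i still wins there by
   sending its all-low signal, which then pays 1; since the other agents are all low
   with probability >= 2/3, any signal paying 1/q there gives the principal more than
   this deviation, so an adversarial agent i leaves the principal at most 1 where Opt is
   1/q.  That loss, (1/q - 1) q (1 - q) (1 - q)^(2k-2), is again P0.  Hence
   E[Principal] <= E[Opt] - (1 - 2kq), and letting q -> 0 gives the ratio
   1 - 1/(2k+1). *)

From mathcomp Require Import all_boot all_order all_algebra.
From mathcomp Require Import reals.
From mathcomp Require Import ring lra.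
From Stdlib Require Import FunctionalExtensionality.
Set Implicit Arguments. Unset Strict Implicit. Unset Printing Implicit Defensive.
Import Order.TTheory GRing.Theory Num.Theory.
Local Open Scope ring_scope.

Section ProductWeights.
Variables (R : comPzSemiRingType) (I J : finType) (P : J -> R).
Hypothesis sum_P1 : \sum_j P j = 1.

Lemma sum_prod_ffun1 : \sum_(f : {ffun I -> J}) \prod_i P (f i) = 1.
Proof. by rewrite -(bigA_distr_bigA (fun _ : I => P)) big1. Qed.

Lemma marginal_prod_ffun (F : J -> R) (i0 : I) :
  \sum_(f : {ffun I -> J}) (\prod_i P (f i)) * F (f i0) = \sum_j P j * F j.
Proof.
pose G i j := if i == i0 then P j * F j else P j.
transitivity (\sum_(f : {ffun I -> J}) \prod_i G i (f i)).
  apply: eq_bigr => f _; rewrite (bigD1 i0) //= [RHS](bigD1 i0) //= /G eqxx.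
  rewrite mulrAC; congr (_ * _); apply: eq_bigr => i /negbTE -> //.
rewrite -bigA_distr_bigA (bigD1 i0) //= /G eqxx [X in _ * X]big1 ?mulr1 //.
by move=> i /negbTE ->.
Qed.

End ProductWeights.

Lemma bernoulli_inequality (R : realDomainType) (y : R) (n : nat) :
  y <= 1 -> 1 - n%:R * y <= (1 - y) ^+ n.
Proof.
move=> y1; elim: n => [|n IH]; first by rewrite expr0 mul0r subr0.
have : (1 - y) * (1 - n%:R * y) <= (1 - y) ^+ n.+1.
  by rewrite exprS; apply: ler_wpM2l; rewrite ?subr_ge0.
have : 0 <= n%:R * y ^+ 2 by rewrite mulr_ge0 ?sqr_ge0.
rewrite -natr1; nra.
Qed.

Lemma sub_loss_lt_ratio (R : realDomainType) (rho N E L : R) :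
  0 <= E <= N -> 0 < L -> (1 - rho) * N < L -> E - L < rho * E.
Proof.
move=> /andP[E0 EN] L0 hN; have [rho1|rho1] := leP 1 rho; first nra.
have : (1 - rho) * E <= (1 - rho) * N by apply: ler_wpM2l; lra.
lra.
Qed.

Section DelegationFacts.
Variables (R : realType) (k m : nat) (T : finType) (p x : T -> R).
Hypotheses (p_ge0 : forall t, 0 <= p t) (sum_p1 : \sum_t p t = 1)
  (x_ge0 : forall t, 0 <= x t).

Definition prob_obs (a : obs m T) : R := \prod_j p (a j).

Definition opt (w : realization k m T) : R :=
  \big[Num.max/0]_(e : 'I_k * 'I_m) x (w e.1 e.2).

Lemma prob_obs_ge0 a : 0 <= prob_obs a.
Proof. exact: prodr_ge0. Qed.

Lemma sum_prob_obs : \sum_a prob_obs a = 1.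
Proof. exact: sum_prod_ffun1. Qed.

Lemma prob_real_ge0 (w : realization k m T) : 0 <= prob_real p w.
Proof. by apply: prodr_ge0 => i _; apply: prob_obs_ge0. Qed.

Lemma sum_prob_real : \sum_(w : realization k m T) prob_real p w = 1.
Proof. exact: (@sum_prod_ffun1 _ 'I_k _ prob_obs sum_prob_obs). Qed.

Lemma prob_realD1 (i : 'I_k) (w : realization k m T) :
  prob_real p w = prob_obs (w i) * \prod_(i' | i' != i) prob_obs (w i').
Proof. by rewrite /prob_real (bigD1 i). Qed.

Lemma marginal_prob_real (F : obs m T -> R) (i : 'I_k) :
  \sum_(w : realization k m T) prob_real p w * F (w i) = \sum_a prob_obs a * F a.
Proof. exact: (@marginal_prod_ffun _ 'I_k _ prob_obs sum_prob_obs). Qed.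

Lemma sum_prob_real_obs (i : 'I_k) (a : obs m T) :
  \sum_(w : realization k m T | w i == a) prob_real p w = prob_obs a.
Proof.
rewrite big_mkcond /=.
transitivity (\sum_(w : realization k m T) prob_real p w * (w i == a)%:R).
  by apply: eq_bigr => w _; case: eqP; rewrite ?mulr1 ?mulr0.
rewrite (marginal_prob_real (fun b => (b == a)%:R)) (bigD1 a) //= eqxx mulr1.
by rewrite big1 ?addr0 // => b /negbTE ->; rewrite mulr0.
Qed.

Lemma payoff_ge0 o (w : realization k m T) : 0 <= payoff x o w.
Proof. by case: o => [[[i j] t]|] //=; case: eqP. Qed.

Lemma le_opt (c : R) (w : realization k m T) (i : 'I_k) (j : 'I_m) :
  c <= x (w i j) -> c <= opt w.
Proof. exact: (bigmax_sup (i, j)). Qed.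

Lemma payoff_le_opt o (w : realization k m T) : payoff x o w <= opt w.
Proof.
case: o => [[[i j] t]|] /=; last exact: bigmax_ge_id.
case: eqP => [<-|_]; [exact: le_opt | exact: bigmax_ge_id].
Qed.

Lemma EOpt_ge0 : 0 <= EOpt k m p x.
Proof.
apply: sumr_ge0 => w _; rewrite mulr_ge0 ?prob_real_ge0 //; exact: bigmax_ge_id.
Qed.

Variables (Sigma : 'I_k -> Type) (g : (forall i, Sigma i) -> option (outcome k m T))
  (s : profile m T Sigma).

Lemma EPrincipal_le_loss (w : realization k m T) :
  EPrincipal p x g s <=
  EOpt k m p x - prob_real p w * (opt w - payoff x (g (signals s w)) w).
Proof.
suff : prob_real p w * (opt w - payoff x (g (signals s w)) w) <=
       EOpt k m p x - EPrincipal p x g s by lra.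
rewrite /EOpt /EPrincipal -sumrB (bigD1 w) //= -mulrBr lerDl.
apply: sumr_ge0 => w' _; rewrite -mulrBr.
by rewrite mulr_ge0 ?prob_real_ge0 // subr_ge0 payoff_le_opt.
Qed.

Lemma signals_dfwith (i : 'I_k) (w w' : realization k m T) :
  (forall i', i' != i -> w i' = w' i') ->
  dfwith (signals s w) (s i (w' i)) = signals s w'.
Proof.
move=> ww'; apply: functional_extensionality_dep => j.
by case: dfwithP => // j' ij'; rewrite /signals ww' // eq_sym.
Qed.

Lemma adversarial_Udev_le (i : 'I_k) a (sigma : Sigma i) :
  adversarial p x g s -> 0 < Wdev p g s a sigma ->
  Udev p x g s a (s i a) <= Udev p x g s a sigma.
Proof. by move=> adv Wpos; apply: ((adv i a).1 (ex_intro _ sigma Wpos)).2. Qed.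

Lemma Wdev_ge (i : 'I_k) (w : realization k m T) (sigma : Sigma i) :
  prob_real p w * (wins i (g (dfwith (signals s w) sigma)) w)%:R <=
  Wdev p g s (w i) sigma.
Proof.
rewrite /Wdev (bigD1 w) //= lerDl.
by apply: sumr_ge0 => w' _; rewrite mulr_ge0 ?prob_real_ge0.
Qed.

Lemma Udev_ge (i : 'I_k) (w : realization k m T) (sigma : Sigma i) :
  prob_real p w * payoff x (g (dfwith (signals s w) sigma)) w <=
  Udev p x g s (w i) sigma.
Proof.
rewrite /Udev (bigD1 w) //= lerDl.
by apply: sumr_ge0 => w' _; rewrite mulr_ge0 ?prob_real_ge0 ?payoff_ge0.
Qed.

Lemma Udev_le (B : R) (i : 'I_k) (w : realization k m T) (sigma : Sigma i) :
  (forall o (w' : realization k m T), payoff x o w' <= B) ->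
  Udev p x g s (w i) sigma <=
  prob_real p w * payoff x (g (dfwith (signals s w) sigma)) w
  + B * (prob_obs (w i) - prob_real p w).
Proof.
move=> payB; rewrite -(sum_prob_real_obs i (w i)) [X in _ * (X - _)](bigD1 w) //=.
rewrite addrC addrK /Udev (bigD1 w) //= lerD2l mulr_sumr; apply: ler_sum => w' _.
by rewrite mulrC ler_wpM2r ?prob_real_ge0.
Qed.

End DelegationFacts.

Section CoinInstance.
Variables (R : realType) (k : nat) (q : R).
Hypotheses (k_gt0 : (0 < k)%N) (q_gt0 : 0 < q) (kq_le : (k.*2)%:R * q <= 1 / 3).

Definition coin_prob (b : bool) : R := if b then q else 1 - q.
Definition coin_val (b : bool) : R := if b then q^-1 else 1.

Local Notation coin_realization := (realization k 2 bool).

Lemma q_le_sixth : q <= 1 / 6.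
Proof.
have : 2 * q <= (k.*2)%:R * q.
  apply: ler_wpM2r; first exact: ltW.
  rewrite -mul2n natrM; have : 1 <= k%:R :> R by rewrite ler1n.
  lra.
move: kq_le; lra.
Qed.

Lemma invq_ge6 : 6 <= q^-1.
Proof.
rewrite -(ler_pM2r q_gt0) mulVf ?gt_eqF //; move: q_le_sixth; lra.
Qed.

Lemma coin_prob_gt0 b : 0 < coin_prob b.
Proof. by move: q_gt0 q_le_sixth; case: b => /=; lra. Qed.

Lemma coin_prob_ge0 b : 0 <= coin_prob b.
Proof. exact: ltW (coin_prob_gt0 b). Qed.

Lemma sum_coin_prob : \sum_b coin_prob b = 1.
Proof. by rewrite big_bool /= addrC subrK. Qed.

Lemma coin_val_ge0 b : 0 <= coin_val b.
Proof. by have := invq_ge6; case: b => /=; lra. Qed.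

Lemma coin_sym_instance : sym_instance coin_prob coin_val.
Proof. split; [exact: coin_prob_ge0 | exact: sum_coin_prob | exact: coin_val_ge0]. Qed.

Lemma payoff_coin_le o (w : coin_realization) : payoff coin_val o w <= q^-1.
Proof.
have := invq_ge6; case: o => [[[i j] [|]]|] /=; try case: (_ == _); lra.
Qed.

Lemma payoff_coin_gt1 o (w : coin_realization) :
  1 < payoff coin_val o w -> payoff coin_val o w = q^-1.
Proof. by case: o => [[[i j] [|]]|] /=; try case: (_ == _); rewrite ?ltxx ?ltr10. Qed.

Lemma prob_coin_ge0 (w : coin_realization) : 0 <= prob_real coin_prob w.
Proof. exact: prob_real_ge0 coin_prob_ge0 w. Qed.

Lemma prob_elem_high (i : 'I_k) (j : 'I_2) :
  \sum_(w : coin_realization) prob_real coin_prob w * (w i j)%:R = q.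
Proof.
rewrite (marginal_prob_real sum_coin_prob (fun a => (a j)%:R)).
rewrite (marginal_prod_ffun sum_coin_prob (fun b : bool => b%:R)).
by rewrite big_bool /= mulr1 mulr0 addr0.
Qed.

Lemma opt_coin_le (w : coin_realization) :
  opt coin_val w <= 1 + \sum_(e : 'I_k * 'I_2) q^-1 * (w e.1 e.2)%:R.
Proof.
have elem_ge0 e : 0 <= q^-1 * (w e.1 e.2)%:R by rewrite mulr_ge0 // invr_ge0 ltW.
have rest_ge0 (P : pred ('I_k * 'I_2)) :
    0 <= \sum_(e | P e) q^-1 * (w e.1 e.2)%:R by apply: sumr_ge0 => e _.
apply: bigmax_le => [|e _]; first by rewrite addr_ge0.
rewrite (bigD1 e) //= addrA; have := rest_ge0 (predC1 e).
by rewrite /coin_val; case: (w e.1 e.2); rewrite /= ?mulr1 ?mulr0; lra.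
Qed.

Lemma EOpt_coin_le : EOpt k 2 coin_prob coin_val <= 1 + (k.*2)%:R.
Proof.
apply: (@le_trans _ _ (\sum_(w : coin_realization) prob_real coin_prob w *
   (1 + \sum_(e : 'I_k * 'I_2) q^-1 * (w e.1 e.2)%:R))).
  apply: ler_sum => w _; apply: ler_wpM2l; last exact: opt_coin_le.
  exact: prob_coin_ge0.
under eq_bigr do rewrite mulrDr mulr1 mulr_sumr.
rewrite big_split /= (sum_prob_real k 2 sum_coin_prob) exchange_big /= lerD2l.
rewrite (eq_bigr (fun _ => 1)) => [|e _].
  by rewrite sumr_const card_prod !card_ord -mul2n mulnC.
under eq_bigr do rewrite mulrCA.
by rewrite -mulr_sumr prob_elem_high mulVf ?gt_eqF.
Qed.

Definition low_obs : obs 2 bool := [ffun => false].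
Definition high_obs (j : 'I_2) : obs 2 bool := [ffun j' => j' == j].
Definition all_low : coin_realization := [ffun => low_obs].
Definition one_high (i : 'I_k) (j : 'I_2) : coin_realization :=
  [ffun i' => if i' == i then high_obs j else low_obs].

Local Notation prob_others_low := (((1 - q) ^+ 2) ^+ k.-1).

Lemma one_high_out (i i' : 'I_k) (j : 'I_2) : i' != i -> one_high i j i' = all_low i'.
Proof. by rewrite !ffunE => /negbTE ->. Qed.

Lemma prob_obs_low : prob_obs coin_prob low_obs = (1 - q) ^+ 2.
Proof. by rewrite /prob_obs !big_ord_recl big_ord0 !ffunE mulr1. Qed.

Lemma prob_obs_high (j : 'I_2) : prob_obs coin_prob (high_obs j) = q * (1 - q).
Proof.
rewrite /prob_obs !big_ord_recl big_ord0 !ffunE mulr1.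
by case: j => [[|[|]]] //= _; rewrite mulrC.
Qed.

Lemma prob_real_others_low (i : 'I_k) (w : coin_realization) :
  (forall i', i' != i -> w i' = low_obs) ->
  prob_real coin_prob w = prob_obs coin_prob (w i) * prob_others_low.
Proof.
move=> w_low; rewrite (prob_realD1 _ i) (eq_bigr (fun _ => (1 - q) ^+ 2)).
  by rewrite prodr_const cardC1 card_ord.
by move=> i' /w_low ->; rewrite prob_obs_low.
Qed.

Lemma prob_all_low : prob_real coin_prob all_low = (1 - q) ^+ 2 * prob_others_low.
Proof.
rewrite (prob_real_others_low (i := Ordinal k_gt0)) ?ffunE ?prob_obs_low //.
by move=> i' _; rewrite ffunE.
Qed.

Lemma prob_one_high (i : 'I_k) (j : 'I_2) :
  prob_real coin_prob (one_high i j) = q * (1 - q) * prob_others_low.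
Proof.
rewrite (prob_real_others_low (i := i)) ?ffunE ?eqxx ?prob_obs_high //.
by move=> i' /one_high_out ->; rewrite ffunE.
Qed.

Lemma prob_all_low_ge : 1 - (k.*2)%:R * q <= prob_real coin_prob all_low.
Proof.
rewrite prob_all_low -exprS prednK // -exprM mul2n bernoulli_inequality //.
by move: q_le_sixth; lra.
Qed.

Lemma prob_others_low_bounds : 2 / 3 <= prob_others_low <= 1.
Proof.
have /andP[q0 q1] : 0 <= (1 - q) ^+ 2 <= 1.
  by rewrite sqr_ge0 /= exprn_ile1 //; move: q_gt0 q_le_sixth; lra.
rewrite exprn_ile1 // andbT.
have : (1 - q) ^+ 2 * prob_others_low <= prob_others_low by rewrite ler_piMl // exprn_ge0.
by move: prob_all_low_ge kq_le; rewrite prob_all_low; lra.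
Qed.

Lemma one_high_loss (i : 'I_k) (j : 'I_2) :
  prob_real coin_prob (one_high i j) * (q^-1 - 1) = prob_real coin_prob all_low.
Proof. by rewrite prob_one_high prob_all_low; field; rewrite gt_eqF. Qed.

Variables (Sigma : 'I_k -> Type) (g : (forall i, Sigma i) -> option (outcome k 2 bool))
  (s : profile 2 bool Sigma).
Hypothesis adv : adversarial coin_prob coin_val g s.

Lemma adversarial_one_high_payoff_le1 (i : 'I_k) (j0 j1 : 'I_2) :
  g (signals s all_low) = Some (i, j0, false) -> j0 != j1 ->
  payoff coin_val (g (signals s (one_high i j1))) (one_high i j1) <= 1.
Proof.
move=> low_out j01; set w1 := one_high i j1.
have w1_i : w1 i = high_obs j1 by rewrite ffunE eqxx.
have w1_ij0 : w1 i j0 = false by rewrite w1_i ffunE (negbTE j01).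
have dev_low : dfwith (signals s w1) (s i (all_low i)) = signals s all_low.
  by apply: signals_dfwith => i'; apply: one_high_out.
have dev_self : dfwith (signals s w1) (s i (w1 i)) = signals s w1.
  exact: signals_dfwith.
have [C_ge C_le] := andP prob_others_low_bounds.
have P_gt0 : 0 < q * (1 - q).
  by rewrite -(prob_obs_high j1); apply: prodr_gt0 => j _; apply: coin_prob_gt0.
have Wpos : 0 < Wdev coin_prob g s (w1 i) (s i (all_low i)).
  apply: lt_le_trans (Wdev_ge coin_prob_ge0 g s w1 _).
  by rewrite dev_low low_out /= w1_ij0 eqxx mulr1 prob_one_high; nra.
rewrite leNgt; apply/negP => /payoff_coin_gt1 high_payoff.
have lo := Udev_ge coin_prob_ge0 coin_val_ge0 g s w1 (s i (w1 i)).
have up := Udev_le coin_prob_ge0 sum_coin_prob g s w1 (s i (all_low i)) payoff_coin_le.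
have := adversarial_Udev_le adv Wpos.
move: lo up; rewrite dev_self dev_low high_payoff low_out /= w1_ij0 /=.
rewrite w1_i prob_obs_high prob_one_high => lo up Uadv.
(* Minimality of the adversarial signal forces P C / q <= P C + (P - P C) / q. *)
set P := q * (1 - q) in P_gt0 lo up; set C := prob_others_low in C_ge C_le lo up.
have : P * (2 * C * q^-1 - C - q^-1) <= 0 by lra.
rewrite pmulr_rle0 // => key.
have : 0 <= (2 * C - 4 / 3) * q^-1.
  by apply: mulr_ge0; [lra | rewrite invr_ge0 ltW].
by move: invq_ge6; lra.
Qed.

Lemma EPrincipal_coin_le :
  EPrincipal coin_prob coin_val g s <=
  EOpt k 2 coin_prob coin_val - prob_real coin_prob all_low.
Proof.
have loss_ge w : prob_real coin_prob all_low <=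
    prob_real coin_prob w * (opt coin_val w - payoff coin_val (g (signals s w)) w) ->
    EPrincipal coin_prob coin_val g s <=
    EOpt k 2 coin_prob coin_val - prob_real coin_prob all_low.
  move=> h; apply: le_trans (EPrincipal_le_loss coin_val coin_prob_ge0 g s w) _.
  by rewrite lerD2l lerN2.
have low_loss : payoff coin_val (g (signals s all_low)) all_low = 0 ->
    EPrincipal coin_prob coin_val g s <=
    EOpt k 2 coin_prob coin_val - prob_real coin_prob all_low.
  move=> low0; apply: (loss_ge all_low); rewrite low0 subr0 ler_peMr ?prob_coin_ge0 //.
  by apply: (le_opt (i := Ordinal k_gt0) (j := ord0)); rewrite !ffunE.
case low_out: (g (signals s all_low)) => [[[i j0] [|]]|];
  try by apply: low_loss; rewrite low_out /= ?ffunE.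
set j1 := lift j0 ord0; apply: (loss_ge (one_high i j1)).
rewrite -(one_high_loss i j1) ler_wpM2l ?prob_coin_ge0 //; apply: lerB.
  by apply: (le_opt (i := i) (j := j1)); rewrite !(ffunE, eqxx).
exact: adversarial_one_high_payoff_le1 low_out (neq_lift j0 ord0).
Qed.

Lemma EPrincipal_coin_lt (rho : R) :
  (1 - rho) * (1 + (k.*2)%:R) < 1 - (k.*2)%:R * q ->
  EPrincipal coin_prob coin_val g s < rho * EOpt k 2 coin_prob coin_val.
Proof.
move=> ratio_lt; apply: le_lt_trans EPrincipal_coin_le _.
have E_bounds : 0 <= EOpt k 2 coin_prob coin_val <= 1 + (k.*2)%:R.
  by rewrite EOpt_coin_le andbT; apply: EOpt_ge0 coin_prob_ge0.
have L_gt0 : 0 < 1 - (k.*2)%:R * q by move: kq_le; lra.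
apply: le_lt_trans (sub_loss_lt_ratio E_bounds L_gt0 ratio_lt).
by rewrite lerD2l lerN2 prob_all_low_ge.
Qed.

End CoinInstance.

Lemma exists_small_bias (R : realFieldType) (k : nat) (rho : R) :
  (0 < k)%N -> 1 - 1 / (2 * k + 1)%:R < rho ->
  exists q : R, [/\ 0 < q, (k.*2)%:R * q <= 1 / 3
                 & (1 - rho) * (1 + (k.*2)%:R) < 1 - (k.*2)%:R * q].
Proof.
move=> k_gt0; rewrite addn1 -natr1 mul2n [_%:R + 1]addrC => hrho.
have k2_gt0 : 0 < (k.*2)%:R :> R by rewrite ltr0n double_gt0.
have ratio_lt1 : (1 - rho) * (1 + (k.*2)%:R) < 1.
  by rewrite -ltr_pdivlMr ?ltr_pwDl //; lra.
set c := Num.min (1 - (1 - rho) * (1 + (k.*2)%:R)) 1.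
have c_gt0 : 0 < c by rewrite lt_min ltr01 andbT subr_gt0.
have c_le1 : c <= 1 by rewrite ge_min lexx orbT.
have c_le : c <= 1 - (1 - rho) * (1 + (k.*2)%:R) by rewrite ge_min lexx.
have kq : (k.*2)%:R * (c / 4 / (k.*2)%:R) = c / 4 by rewrite mulrC divfK ?gt_eqF.
by exists (c / 4 / (k.*2)%:R); rewrite kq !divr_gt0 //; split=> //; lra.
Qed.

Theorem mainTheorem3 (R : realType) (k : nat) (hk : (0 < k)%N)
  (rho : R) (hrho : 1 - 1 / (2 * k + 1)%:R < rho) :
  exists (m : nat) (T : finType) (p x : T -> R),
    sym_instance p x /\
    forall (Sigma : 'I_k -> Type)
           (g : (forall i, Sigma i) -> option (outcome k m T)),
      ~ achieves p x g rho.
Proof.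
have [q [q_gt0 kq_le ratio_lt]] := exists_small_bias hk hrho.
exists 2%N, bool, (coin_prob q), (coin_val q).
split; first exact: coin_sym_instance hk q_gt0 kq_le.
move=> Sigma g [[s adv] /(_ s adv)]; apply/negP; rewrite -ltNge.
exact: (EPrincipal_coin_lt hk q_gt0 kq_le adv ratio_lt).
Qed.
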